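(* Let $A$ be a $*$-algebra with $*$-calculus carrying an integrable almost complex structure, $E$ a finitely generated projective holomorphic left $A$-module with holomorphic structure $\overline\partial_E$, and $\langle\,,\,\rangle:E\otimes_A\overline E\to A$ a (non-degenerate) hermitian metric. There is a unique left connection $\nabla_E$ (the Chern connection) preserving the hermitian metric with $(\pi^{0,1}\otimes\mathrm{id})\nabla_E=\overline{\partial}_E$. Writing its Christoffel matrix as $\Gamma=\Gamma_++\Gamma_-$ with $\Gamma_+\in M_n(\Omega^{1,0})$, $\Gamma_-\in M_n(\Omega^{0,1})$, the part $\Gamma_-$ is determined by $\overline\partial_E$ and $$-\Gamma_+=\partial g^\bullet\cdot g_\bullet+g^\bullet\,(\Gamma_-)^*\,g_\bullet,$$ where $(\Gamma_-)^*$ is the conjugate transpose, $((\Gamma_-)^* )_{ij}=((\Gamma_-)_{ji})^*$, and $\partial g^\bullet$ is applied entrywise.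
   Context: Integrable almost complex structure: bimodule decomposition $\Omega^n=\oplus_{p+q=n}\Omega^{p,q}$, ${\rm d}=\partial+\overline\partial$ with $\partial:\Omega^{p,q}\to\Omega^{p+1,q}$, $\overline\partial:\Omega^{p,q}\to\Omega^{p,q+1}$, $\partial^2=\overline\partial^2=0$, $\wedge$ respecting bidegree, $*$ exchanging $\Omega^{1,0},\Omega^{0,1}$, projections $\pi^{p,q}$. Holomorphic module: $\overline\partial_E:E\to\Omega^{0,1}\otimes_AE$, $\overline\partial_E(a.e)=\overline\partial a\otimes e+a.\overline\partial_Ee$, $(\overline\partial\otimes\mathrm{id}-\mathrm{id}\wedge\overline\partial_E)\overline\partial_E=0$. Matrix formalism: fix a dual basis $e^i\in E$, $e_i\in E^\circ={}_A{\rm Hom}(E,A)$, $1\le i\le n$, with $e=\sum_i e_i(e)e^i$; $P_{ji}=e_i(e^j)$, so $P^2=P$. Christoffel symbols: $\Gamma^i_k=-(\mathrm{id}\otimes{\rm ev})(\nabla_Ee^i\otimes e_k)$, so $\nabla_Ee^i=-\Gamma^i_k\otimes e^k$, and $\Gamma_{ij}=\Gamma^i_j$; these satisfy $\Gamma P=\Gamma$. Metric: $g^{ij}=\langle e^i,\overline{e^j}\rangle$; the isomorphism $G:\overline E\to E^\circ$ with $\langle,\rangle={\rm ev}(\mathrm{id}\otimes G)$ has $G(\overline{e^i})=e_jg^{ji}$ and $G^{-1}(e_i)=\overline{g_{ij}e^j}$, normalised so that $g_{ij}P_{jk}=g_{ik}$; $g^\bullet=(g^{ij})$, $g_\bullet=(g_{ij})$,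 satisfying $g^{\bullet*}=g^\bullet$, $g_\bullet^*=g_\bullet$, $g^\bullet g_\bullet=P$, $g_\bullet P=g_\bullet$, $Pg^\bullet=g^\bullet$. A connection preserves the metric if ${\rm d}\langle e,\overline f\rangle=(\mathrm{id}\otimes\langle,\rangle)(\nabla_Ee\otimes\overline f)+(\langle,\rangle\otimes\mathrm{id})(e\otimes\tilde\nabla\overline f)$ with $\tilde\nabla(\overline f)=\overline g\otimes\kappa^*$ when $\nabla_Ef=\kappa\otimes g$. *)

(* Concrete "matrix formalism" model of a finitely
   generated projective holomorphic module over a *-algebra with an
   integrable almost complex structure (calculus truncated at degree 2). *)
From HB Require Import structures.
From mathcomp Require Import all_boot all_order all_algebra all_field.
Set Implicit Arguments. Unset Strict Implicit. Unset Printing Implicit Defensive.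
Import Order.TTheory GRing.Theory Num.Theory.
Local Open Scope ring_scope.

(* Data of a *-algebra A over C (= algC) with a *-differential calculus
   Omega^0 = A, Omega^1 = O1, Omega^2 = O2, and an almost complex
   structure given by the bidegree projections.                        *)
Record calc (A : algType algC) (O1 O2 : lmodType algC) := Calc {
  cstar : A -> A;
  lm1 : A -> O1 -> O1;  rm1 : O1 -> A -> O1;
  lm2 : A -> O2 -> O2;  rm2 : O2 -> A -> O2;
  d0 : A -> O1;  d1 : O1 -> O2;
  wedge : O1 -> O1 -> O2;
  star1 : O1 -> O1;  star2 : O2 -> O2;
  pi10 : O1 -> O1;  pi01 : O1 -> O1;
  pi20 : O2 -> O2;  pi11 : O2 -> O2;  pi02 : O2 -> O2
}.

Definition is_bimod (A : algType algC) (M : lmodType algC)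
    (lm : A -> M -> M) (rm : M -> A -> M) : Prop :=
     (forall a b w, lm (a + b) w = lm a w + lm b w)
  /\ (forall a w v, lm a (w + v) = lm a w + lm a v)
  /\ (forall a b w, rm w (a + b) = rm w a + rm w b)
  /\ (forall a w v, rm (w + v) a = rm w a + rm v a)
  /\ (forall a b w, lm (a * b) w = lm a (lm b w))
  /\ (forall a b w, rm w (a * b) = rm (rm w a) b)
  /\ (forall w, lm 1 w = w /\ rm w 1 = w)
  /\ (forall a b w, lm a (rm w b) = rm (lm a w) b)
  /\ (forall (c : algC) a w,
         [/\ lm (c *: a) w = c *: lm a w, lm a (c *: w) = c *: lm a w,
             rm w (c *: a) = c *: rm w a & rm (c *: w) a = c *: rm w a]).

Definition is_bimod_map (A : algType algC) (M : lmodType algC)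
    (lm : A -> M -> M) (rm : M -> A -> M) (f : M -> M) : Prop :=
  [/\ (forall (c : algC) w v, f (c *: w + v) = c *: f w + f v),
      (forall a w, f (lm a w) = lm a (f w)) &
      (forall a w, f (rm w a) = rm (f w) a)].

Definition is_star_map (A : algType algC) (M : lmodType algC)
    (sA : A -> A) (lm : A -> M -> M) (rm : M -> A -> M) (s : M -> M) : Prop :=
  [/\ (forall w v, s (w + v) = s w + s v),
      (forall (c : algC) w, s (c *: w) = c^* *: s w),
      (forall w, s (s w) = w),
      (forall a w, s (lm a w) = rm (s w) (sA a)) &
      (forall a w, s (rm w a) = lm (sA a) (s w))].

Record calc_ax (A : algType algC) (O1 O2 : lmodType algC)
    (C : calc A O1 O2) : Prop := CalcAx {
  ax_star_add : forall a b, cstar C (a + b) = cstar C a + cstar C b;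
  ax_star_scale : forall (c : algC) a, cstar C (c *: a) = c^* *: cstar C a;
  ax_star_mul : forall a b, cstar C (a * b) = cstar C b * cstar C a;
  ax_star_inv : forall a, cstar C (cstar C (a)) = a;
  ax_bimod1 : is_bimod (lm1 C) (rm1 C);
  ax_bimod2 : is_bimod (lm2 C) (rm2 C);
  ax_d0_lin : forall (c : algC) a b, d0 C (c *: a + b) = c *: d0 C a + d0 C b;
  ax_d1_lin : forall (c : algC) w v, d1 C (c *: w + v) = c *: d1 C w + d1 C v;
  ax_leibniz0 : forall a b, d0 C (a * b) = rm1 C (d0 C a) b + lm1 C a (d0 C b);
  ax_span1 : forall w : O1, exists s : seq (A * A),
      w = \sum_(p <- s) lm1 C p.1 (d0 C p.2);
  ax_dd : forall a, d1 C (d0 C a) = 0;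
  ax_wedge_addl : forall w w' v, wedge C (w + w') v = wedge C w v + wedge C w' v;
  ax_wedge_addr : forall w v v', wedge C w (v + v') = wedge C w v + wedge C w v';
  ax_wedge_scale : forall (c : algC) w v,
      wedge C (c *: w) v = c *: wedge C w v /\ wedge C w (c *: v) = c *: wedge C w v;
  ax_wedge_bal : forall w a v, wedge C (rm1 C w a) v = wedge C w (lm1 C a v);
  ax_wedge_lm : forall a w v, lm2 C a (wedge C w v) = wedge C (lm1 C a w) v;
  ax_wedge_rm : forall a w v, rm2 C (wedge C w v) a = wedge C w (rm1 C v a);
  ax_leibniz1l : forall a w, d1 C (lm1 C a w) = wedge C (d0 C a) w + lm2 C a (d1 C w);
  ax_leibniz1r : forall a w, d1 C (rm1 C w a) = rm2 C (d1 C w) a - wedge C w (d0 C a);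
  ax_span2 : forall x : O2, exists s : seq (O1 * O1),
      x = \sum_(p <- s) wedge C p.1 p.2;
  ax_star1 : is_star_map (cstar C) (lm1 C) (rm1 C) (star1 C);
  ax_star2 : is_star_map (cstar C) (lm2 C) (rm2 C) (star2 C);
  ax_star_d0 : forall a, star1 C (d0 C a) = d0 C (cstar C a);
  ax_star_d1 : forall w, star2 C (d1 C w) = d1 C (star1 C w);
  ax_star_wedge : forall w v,
      star2 C (wedge C w v) = - wedge C (star1 C v) (star1 C w);
  ax_pi10 : is_bimod_map (lm1 C) (rm1 C) (pi10 C);
  ax_pi01 : is_bimod_map (lm1 C) (rm1 C) (pi01 C);
  ax_pi20 : is_bimod_map (lm2 C) (rm2 C) (pi20 C);
  ax_pi11 : is_bimod_map (lm2 C) (rm2 C) (pi11 C);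
  ax_pi02 : is_bimod_map (lm2 C) (rm2 C) (pi02 C);
  ax_dec1 : forall w, pi10 C w + pi01 C w = w;
  ax_proj1 : forall w, [/\ pi10 C (pi10 C w) = pi10 C w, pi01 C (pi01 C w) = pi01 C w,
                           pi10 C (pi01 C w) = 0 & pi01 C (pi10 C w) = 0];
  ax_dec2 : forall x, pi20 C x + pi11 C x + pi02 C x = x;
  ax_proj2 : forall x,
      pi20 C (pi20 C x) = pi20 C x /\ pi11 C (pi11 C x) = pi11 C x
      /\ pi02 C (pi02 C x) = pi02 C x
      /\ pi20 C (pi11 C x) = 0 /\ pi20 C (pi02 C x) = 0 /\ pi11 C (pi20 C x) = 0
      /\ pi11 C (pi02 C x) = 0 /\ pi02 C (pi20 C x) = 0 /\ pi02 C (pi11 C x) = 0;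
  ax_star_pi1 : forall w, star1 C (pi10 C w) = pi01 C (star1 C w);
  ax_star_pi2 : forall x, star2 C (pi20 C x) = pi02 C (star2 C x)
                          /\ star2 C (pi11 C x) = pi11 C (star2 C x);
  ax_wedge_bideg : forall w v,
      [/\ pi20 C (wedge C (pi10 C w) (pi10 C v)) = wedge C (pi10 C w) (pi10 C v),
          pi11 C (wedge C (pi10 C w) (pi01 C v)) = wedge C (pi10 C w) (pi01 C v),
          pi11 C (wedge C (pi01 C w) (pi10 C v)) = wedge C (pi01 C w) (pi10 C v) &
          pi02 C (wedge C (pi01 C w) (pi01 C v)) = wedge C (pi01 C w) (pi01 C v)];
  (* integrability: d = del + delbar with the bidegrees *)
  ax_d_bideg : forall w, pi02 C (d1 C (pi10 C w)) = 0 /\ pi20 C (d1 C (pi01 C w)) = 0;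
  ax_del2 : forall a, pi20 C (d1 C (pi10 C (d0 C a))) = 0;
  ax_delbar2 : forall a, pi02 C (d1 C (pi01 C (d0 C a))) = 0
}.

Definition del (A : algType algC) (O1 O2 : lmodType algC) (C : calc A O1 O2)
  (a : A) : O1 := pi10 C (d0 C a).
Definition delbar (A : algType algC) (O1 O2 : lmodType algC) (C : calc A O1 O2)
  (a : A) : O1 := pi01 C (d0 C a).
Definition delbar1 (A : algType algC) (O1 O2 : lmodType algC) (C : calc A O1 O2)
  (w : O1) : O2 := pi02 C (d1 C w).

(* The f.g. projective module E = A^n P, P = P^2 (P_{ji} = e_i(e^j)).
   An element e of E is its coordinate row (e_i(e))_i, with e P = e.
   Omega^k (x)_A E = (Omega^k)^n P likewise.  e^i = i-th row of P.     *)
Section ModuleModel.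
Variables (A : algType algC) (O1 O2 : lmodType algC) (C : calc A O1 O2).
Variables (n : nat) (P : 'M[A]_n).

Definition in_E (v : 'I_n -> A) : Prop :=
  forall j, \sum_i v i * P i j = v j.
Definition in_OE (w : 'I_n -> O1) : Prop :=
  forall j, \sum_i rm1 C (w i) (P i j) = w j.
Definition ebasis (i : 'I_n) : 'I_n -> A := fun j => P i j.

Definition is_left_connection (nabla : ('I_n -> A) -> ('I_n -> O1)) : Prop :=
  [/\ (forall v, in_E v -> in_OE (nabla v)),
      (forall v w, in_E v -> in_E w -> forall j,
          nabla (fun k => v k + w k) j = nabla v j + nabla w j) &
      (forall a v, in_E v -> forall j,
          nabla (fun k => a * v k) j = rm1 C (d0 C a) (v j) + lm1 C a (nabla v j))].

Definition is_holomorphic (dE : ('I_n -> A) -> ('I_n -> O1)) : Prop :=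
  [/\ (forall v, in_E v -> in_OE (dE v) /\ forall j, pi01 C (dE v j) = dE v j),
      (forall v w, in_E v -> in_E w -> forall j,
          dE (fun k => v k + w k) j = dE v j + dE w j),
      (forall a v, in_E v -> forall j,
          dE (fun k => a * v k) j = rm1 C (delbar C a) (v j) + lm1 C a (dE v j)) &
      (* (delbar (x) id - id /\ delbar_E) delbar_E = 0 *)
      (forall v, in_E v -> forall j,
          \sum_k rm2 C (delbar1 C (dE v k)) (P k j)
          - \sum_k \sum_m rm2 C (wedge C (dE v k) (dE (ebasis k) m)) (P m j) = 0)].

(* h e f = < e , bar f > : non-degenerate hermitian metric *)
Definition is_hermitian_metric (h : ('I_n -> A) -> ('I_n -> A) -> A) : Prop :=
  [/\ (forall e e' f, in_E e -> in_E e' -> in_E f ->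
          h (fun k => e k + e' k) f = h e f + h e' f
          /\ h f (fun k => e k + e' k) = h f e + h f e'),
      (forall a e f, in_E e -> in_E f ->
          h (fun k => a * e k) f = a * h e f
          /\ h e (fun k => a * f k) = h e f * cstar C a),
      (forall e f, in_E e -> in_E f -> cstar C (h e f) = h f e) &
      (* G : bar E -> E^o,  bar f |-> < . , bar f >  is bijective *)
      (forall alpha : ('I_n -> A) -> A,
          (forall e e', in_E e -> in_E e' -> alpha (fun k => e k + e' k) = alpha e + alpha e') ->
          (forall a e, in_E e -> alpha (fun k => a * e k) = a * alpha e) ->
          exists f, [/\ in_E f, (forall e, in_E e -> alpha e = h e f) &
             (forall f', in_E f' -> (forall e, in_E e -> alpha e = h e f') ->
                 forall j, f' j = f j)])].

Definition gup (h : ('I_n -> A) -> ('I_n -> A) -> A) : 'M[A]_n :=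
  \matrix_(i, j) h (ebasis i) (ebasis j).

(* g_. : G^{-1}(e_i) = bar (g_{ij} e^j) with g_{ij} P_{jk} = g_{ik} *)
Definition is_glow (h : ('I_n -> A) -> ('I_n -> A) -> A) (gl : 'M[A]_n) : Prop :=
  forall i, in_E (fun j => gl i j) /\
            (forall e, in_E e -> h e (fun j => gl i j) = e i).

Definition preserves_metric (h : ('I_n -> A) -> ('I_n -> A) -> A)
    (nabla : ('I_n -> A) -> ('I_n -> O1)) : Prop :=
  forall e f, in_E e -> in_E f ->
    d0 C (h e f) = \sum_m rm1 C (nabla e m) (h (ebasis m) f)
                   + \sum_m lm1 C (h e (ebasis m)) (star1 C (nabla f m)).

Definition is_chern (dE : ('I_n -> A) -> ('I_n -> O1))
    (h : ('I_n -> A) -> ('I_n -> A) -> A) (nabla : ('I_n -> A) -> ('I_n -> O1)) : Prop :=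
  [/\ is_left_connection nabla, preserves_metric h nabla &
      (forall v, in_E v -> forall j, pi01 C (nabla v j) = dE v j)].

(* Christoffel symbols Gamma_{ik} = Gamma^i_k = -(id (x) ev)(nabla e^i (x) e_k) *)
Definition christoffel (nabla : ('I_n -> A) -> ('I_n -> O1)) (i k : 'I_n) : O1 :=
  - nabla (ebasis i) k.

End ModuleModel.

From mathcomp Require Import all_boot all_algebra all_field.
From Stdlib Require Import FunctionalExtensionality.
Set Implicit Arguments. Unset Strict Implicit. Unset Printing Implicit Defensive.
Import GRing.Theory.
Local Open Scope ring_scope.

(* For w in Omega^1 (x) E and f in E write hpair w f := (id (x) <,>)(w (x) bar f), and
   let g_k := G^-1(e_k) (the row [glrow k]), so that <e, bar g_k> = e_k.  Testing metric
   compatibility of a connection nabla against g_k gives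
     d e_k = (nabla e)_k + (hpair (nabla g_k) e)^*,
   whose (1,0)-part expresses the (1,0)-part of nabla through del and
   delbar_E = pi^{0,1} nabla:
     pi^{1,0} (nabla e)_k = del e_k - (hpair (delbar_E g_k) e)^*.
   This gives uniqueness.  For existence, take del + delbar_E minus this correction,
   projected back onto Omega^1 (x) E by P.  Metric compatibility is invariant under
   exchanging e and f and applying *, so only its (0,1)-part has to be checked; that
   part is the Leibniz rule of delbar_E for the expansion e = sum_k <e, bar e^k> g_k.
   Expanding g_k = g_kl e^l in the same way gives the formula for Gamma_+. *)

Lemma morph_add0 (U V : zmodType) (f : U -> V) :
  {morph f : x y / x + y} -> f 0 = 0.
Proof. by move=> fD; apply/(addrI (f 0)); rewrite -fD !addr0. Qed.

Lemma morph_addN (U V : zmodType) (f : U -> V) :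
  {morph f : x y / x + y} -> {morph f : x / - x}.
Proof. by move=> fD x; apply/(addrI (f x)); rewrite -fD !subrr (morph_add0 fD). Qed.

Section Calculus.
Variables (A : algType algC) (O1 O2 : lmodType algC) (C : calc A O1 O2).
Hypothesis HC : calc_ax C.

Local Notation lm := (lm1 C).
Local Notation rm := (rm1 C).
Local Notation star := (star1 C).

Lemma lmDr a : {morph lm a : w v / w + v}.
Proof. by have [_ [H _]] := ax_bimod1 HC; apply: H. Qed.
Lemma rmDr w : {morph rm w : a b / a + b}.
Proof. by have [_ [_ [H _]]] := ax_bimod1 HC => a b; apply: H. Qed.
Lemma rmDl a : {morph rm^~ a : w v / w + v}.
Proof. by have [_ [_ [_ [H _]]]] := ax_bimod1 HC; apply: H. Qed.
Lemma rmM w a b : rm w (a * b) = rm (rm w a) b.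
Proof. by have [_ [_ [_ [_ [_ [H _]]]]]] := ax_bimod1 HC; apply: H. Qed.
Lemma lmrA a w b : lm a (rm w b) = rm (lm a w) b.
Proof. by have [_ [_ [_ [_ [_ [_ [_ [H _]]]]]]]] := ax_bimod1 HC; apply: H. Qed.

Lemma lm0r a : lm a 0 = 0. Proof. exact: morph_add0 (lmDr a). Qed.
Lemma rm0l a : rm 0 a = 0. Proof. exact: morph_add0 (rmDl a). Qed.
Lemma lmNr a : {morph lm a : w / - w}. Proof. exact: morph_addN (lmDr a). Qed.
Lemma rmNl a : {morph rm^~ a : w / - w}. Proof. exact: morph_addN (rmDl a). Qed.

Section BigActions.
Variables (I : Type) (r : seq I).
Lemma lm_sumr a (F : I -> O1) : lm a (\sum_(i <- r) F i) = \sum_(i <- r) lm a (F i).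
Proof. exact: (big_morph (lm a) (lmDr a) (lm0r a)). Qed.
Lemma rm_suml a (F : I -> O1) : rm (\sum_(i <- r) F i) a = \sum_(i <- r) rm (F i) a.
Proof. exact: (big_morph (rm^~ a) (rmDl a) (rm0l a)). Qed.
Lemma rm_sumr w (F : I -> A) : rm w (\sum_(i <- r) F i) = \sum_(i <- r) rm w (F i).
Proof. exact: (big_morph (rm w) (rmDr w) (morph_add0 (rmDr w))). Qed.
End BigActions.

Lemma pi10D : {morph pi10 C : w v / w + v}.
Proof. by have [L _ _] := ax_pi10 HC => w v; have := L 1 w v; rewrite !scale1r. Qed.
Lemma pi01D : {morph pi01 C : w v / w + v}.
Proof. by have [L _ _] := ax_pi01 HC => w v; have := L 1 w v; rewrite !scale1r. Qed.
Lemma pi10N : {morph pi10 C : w / - w}. Proof. exact: morph_addN pi10D. Qed.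
Lemma pi01N : {morph pi01 C : w / - w}. Proof. exact: morph_addN pi01D. Qed.
Lemma pi10_rm a w : pi10 C (rm w a) = rm (pi10 C w) a.
Proof. by have [_ _ ->] := ax_pi10 HC. Qed.
Lemma pi01_rm a w : pi01 C (rm w a) = rm (pi01 C w) a.
Proof. by have [_ _ ->] := ax_pi01 HC. Qed.
Lemma pi10_sum (I : Type) (r : seq I) (F : I -> O1) :
  pi10 C (\sum_(i <- r) F i) = \sum_(i <- r) pi10 C (F i).
Proof. exact: (big_morph _ pi10D (morph_add0 pi10D)). Qed.
Lemma pi01_sum (I : Type) (r : seq I) (F : I -> O1) :
  pi01 C (\sum_(i <- r) F i) = \sum_(i <- r) pi01 C (F i).
Proof. exact: (big_morph _ pi01D (morph_add0 pi01D)). Qed.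
Lemma pi_dec w : pi10 C w + pi01 C w = w. Proof. exact: ax_dec1. Qed.
Lemma pi10_10 w : pi10 C (pi10 C w) = pi10 C w. Proof. by case: (ax_proj1 HC w). Qed.
Lemma pi01_10 w : pi01 C (pi10 C w) = 0. Proof. by case: (ax_proj1 HC w). Qed.
Lemma pi10_01 w : pi10 C (pi01 C w) = 0. Proof. by case: (ax_proj1 HC w). Qed.

Lemma starD : {morph star : w v / w + v}. Proof. by case: (ax_star1 HC). Qed.
Lemma star0 : star 0 = 0. Proof. exact: morph_add0 starD. Qed.
Lemma starN : {morph star : w / - w}. Proof. exact: morph_addN starD. Qed.
Lemma starK : involutive star. Proof. by case: (ax_star1 HC). Qed.
Lemma star_lm a w : star (lm a w) = rm (star w) (cstar C a).
Proof. by case: (ax_star1 HC). Qed.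
Lemma star_rm a w : star (rm w a) = lm (cstar C a) (star w).
Proof. by case: (ax_star1 HC). Qed.
Lemma star_pi10 w : star (pi10 C w) = pi01 C (star w). Proof. exact: ax_star_pi1. Qed.
Lemma star_pi01 w : star (pi01 C w) = pi10 C (star w).
Proof. by rewrite -{1}(starK w) -star_pi10 starK. Qed.
Lemma star_sum (I : Type) (r : seq I) (F : I -> O1) :
  star (\sum_(i <- r) F i) = \sum_(i <- r) star (F i).
Proof. exact: (big_morph star starD (morph_add0 starD)). Qed.

Lemma cstarK : involutive (cstar C). Proof. exact: ax_star_inv. Qed.

Lemma d0D : {morph d0 C : a b / a + b}.
Proof. by move=> a b; have := ax_d0_lin HC 1 a b; rewrite !scale1r. Qed.

Lemma del_dec a : del C a + delbar C a = d0 C a. Proof. exact: pi_dec. Qed.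
Lemma delD : {morph del C : a b / a + b}.
Proof. by move=> a b; rewrite /del d0D pi10D. Qed.
Lemma delM a b : del C (a * b) = rm (del C a) b + lm a (del C b).
Proof. by rewrite /del ax_leibniz0 // pi10D pi10_rm; have [_ -> _] := ax_pi10 HC. Qed.
Lemma delbarM a b : delbar C (a * b) = rm (delbar C a) b + lm a (delbar C b).
Proof. by rewrite /delbar ax_leibniz0 // pi01D pi01_rm; have [_ -> _] := ax_pi01 HC. Qed.
Lemma del_sum (I : Type) (r : seq I) (F : I -> A) :
  del C (\sum_(i <- r) F i) = \sum_(i <- r) del C (F i).
Proof. exact: (big_morph (del C) delD (morph_add0 delD)). Qed.
Lemma delbar_sum (I : Type) (r : seq I) (F : I -> A) :
  delbar C (\sum_(i <- r) F i) = \sum_(i <- r) delbar C (F i).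
Proof.
have delbarD : {morph delbar C : a b / a + b} by move=> a b; rewrite /delbar d0D pi01D.
exact: (big_morph (delbar C) delbarD (morph_add0 delbarD)).
Qed.
Lemma star_del a : star (del C a) = delbar C (cstar C a).
Proof. by rewrite /del star_pi10 ax_star_d0. Qed.
Lemma star_delbar a : star (delbar C a) = del C (cstar C a).
Proof. by rewrite /delbar star_pi01 ax_star_d0. Qed.

Lemma eq_pi01_star x y :
  pi01 C x = pi01 C y -> pi01 C (star x) = pi01 C (star y) -> x = y.
Proof.
move=> Exy Esxy; rewrite -(pi_dec x) -(pi_dec y) Exy.
by rewrite -(starK (pi10 C x)) -(starK (pi10 C y)) !star_pi10 Esxy.
Qed.

Section Module.
Variables (n : nat) (P : 'M[A]_n).
Hypothesis HP : P *m P = P.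
Local Notation eb := (ebasis P).

Lemma in_E0 : in_E P (fun _ => 0).
Proof. by move=> j; rewrite big1 // => i _; rewrite mul0r. Qed.

Lemma in_E_sum (I : Type) (r : seq I) (F : I -> 'I_n -> A) :
  (forall i, in_E P (F i)) -> in_E P (fun k => \sum_(i <- r) F i k).
Proof.
move=> HF j; under eq_bigr => k _ do rewrite mulr_suml.
by rewrite exchange_big; apply: eq_bigr => i _; apply: HF.
Qed.

Lemma in_E_scale a v : in_E P v -> in_E P (fun k => a * v k).
Proof. by move=> Hv j; rewrite -(Hv j) mulr_sumr; apply: eq_bigr => i _; rewrite mulrA. Qed.

Lemma in_E_ebasis i : in_E P (eb i).
Proof. by move=> j; have := congr1 (fun M : 'M[A]_n => M i j) HP; rewrite mxE. Qed.

Lemma in_E_expand v : in_E P v -> v = (fun k => \sum_i v i * eb i k).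
Proof. by move=> Hv; apply: functional_extensionality => k; rewrite Hv. Qed.

Lemma in_E_big_morph (V : zmodType) (phi : ('I_n -> A) -> V) :
    (forall v w, in_E P v -> in_E P w -> phi (fun k => v k + w k) = phi v + phi w) ->
  forall (I : Type) (r : seq I) (F : I -> 'I_n -> A), (forall i, in_E P (F i)) ->
  phi (fun k => \sum_(i <- r) F i k) = \sum_(i <- r) phi (F i).
Proof.
move=> phiD I r F HF; elim: r => [|i r IHr].
  have -> : (fun k => \sum_(i <- [::]) F i k) = (fun _ => 0).
    by apply: functional_extensionality => k; rewrite big_nil.
  have := phiD _ _ in_E0 in_E0; rewrite big_nil.
  have -> : (fun _ : 'I_n => (0 : A) + 0) = (fun _ => 0).
    by apply: functional_extensionality => k; rewrite addr0.
  by rewrite -{1}[phi _]addr0 => /addrI.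
have -> : (fun k => \sum_(j <- i :: r) F j k) = (fun k => F i k + \sum_(j <- r) F j k).
  by apply: functional_extensionality => k; rewrite big_cons.
by rewrite phiD ?big_cons ?IHr //; apply: in_E_sum.
Qed.

Section Metric.
Variable h : ('I_n -> A) -> ('I_n -> A) -> A.
Hypothesis Hh : is_hermitian_metric C P h.

Lemma hDl e e' f : in_E P e -> in_E P e' -> in_E P f ->
  h (fun k => e k + e' k) f = h e f + h e' f.
Proof. by case: Hh => H _ _ _ ? ? ?; case: (H e e' f). Qed.
Lemma hDr e f f' : in_E P e -> in_E P f -> in_E P f' ->
  h e (fun k => f k + f' k) = h e f + h e f'.
Proof. by case: Hh => H _ _ _ ? ? ?; case: (H f f' e). Qed.
Lemma hZl a e f : in_E P e -> in_E P f -> h (fun k => a * e k) f = a * h e f.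
Proof. by case: Hh => _ H _ _ ? ?; case: (H a e f). Qed.
Lemma hZr a e f : in_E P e -> in_E P f -> h e (fun k => a * f k) = h e f * cstar C a.
Proof. by case: Hh => _ H _ _ ? ?; case: (H a e f). Qed.
Lemma h_adj e f : in_E P e -> in_E P f -> cstar C (h e f) = h f e.
Proof. by case: Hh => _ _ H _; apply: H. Qed.

Lemma h_linl (c : 'I_n -> A) (F : 'I_n -> 'I_n -> A) f :
  (forall i, in_E P (F i)) -> in_E P f ->
  h (fun k => \sum_i c i * F i k) f = \sum_i c i * h (F i) f.
Proof.
move=> HF Hf; rewrite (in_E_big_morph (phi := h^~ f)) => [|v w Hv Hw|i].
- by apply: eq_bigr => i _; rewrite hZl.
- exact: hDl.
- exact: in_E_scale.
Qed.

Lemma h_linr (c : 'I_n -> A) (F : 'I_n -> 'I_n -> A) e :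
  (forall i, in_E P (F i)) -> in_E P e ->
  h e (fun k => \sum_i c i * F i k) = \sum_i h e (F i) * cstar C (c i).
Proof.
move=> HF He; rewrite (in_E_big_morph (phi := h e)) => [|v w Hv Hw|i].
- by apply: eq_bigr => i _; rewrite hZr.
- exact: hDr.
- exact: in_E_scale.
Qed.

Lemma h_expandl e f : in_E P e -> in_E P f -> h e f = \sum_i e i * h (eb i) f.
Proof. by move=> He Hf; rewrite {1}(in_E_expand He) h_linl //; apply: in_E_ebasis. Qed.
Lemma h_expandr e f : in_E P e -> in_E P f -> h e f = \sum_i h e (eb i) * cstar C (f i).
Proof. by move=> He Hf; rewrite {1}(in_E_expand Hf) h_linr //; apply: in_E_ebasis. Qed.

Lemma exists_glow : exists gl : 'M[A]_n, is_glow P h gl.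
Proof.
have coord i : exists f, in_E P f /\ forall e, in_E P e -> h e f = e i.
  case: Hh => _ _ _ /(_ (fun e => e i)) [] // f [Hf Hrep _].
  by exists f; split=> // e He; rewrite -Hrep.
have [f Hf] := fin_all_exists coord.
exists (\matrix_(i, j) f i j) => i.
have -> : (fun j => (\matrix_(i, j) f i j) i j) = f i.
  by apply: functional_extensionality => j; rewrite mxE.
exact: Hf.
Qed.

Definition hpair (w : 'I_n -> O1) (f : 'I_n -> A) : O1 := \sum_m rm (w m) (h (eb m) f).

Lemma eq_hpair w w' f : w =1 w' -> hpair w f = hpair w' f.
Proof. by move=> ww'; apply: eq_bigr => m _; rewrite ww'. Qed.

Lemma hpair0 f : hpair (fun _ => 0) f = 0.
Proof. by rewrite /hpair big1 // => m _; apply: rm0l. Qed.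

Lemma hpairD w w' f : hpair (fun m => w m + w' m) f = hpair w f + hpair w' f.
Proof. by rewrite /hpair -big_split; apply: eq_bigr => m _; apply: rmDl. Qed.

Lemma hpair_sum (I : Type) (r : seq I) (W : I -> 'I_n -> O1) f :
  hpair (fun m => \sum_(i <- r) W i m) f = \sum_(i <- r) hpair (W i) f.
Proof.
by rewrite /hpair exchange_big; apply: eq_bigr => m _; rewrite rm_suml.
Qed.

Lemma hpair_lm a w f : hpair (fun m => lm a (w m)) f = lm a (hpair w f).
Proof. by rewrite /hpair lm_sumr; apply: eq_bigr => m _; rewrite lmrA. Qed.

Lemma hpair_rm w F f : in_E P F -> in_E P f -> hpair (fun m => rm w (F m)) f = rm w (h F f).
Proof.
by move=> HF Hf; rewrite (h_expandl HF Hf) rm_sumr; apply: eq_bigr => m _; rewrite rmM.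
Qed.

Lemma pi10_hpair w f : pi10 C (hpair w f) = hpair (fun m => pi10 C (w m)) f.
Proof.
by rewrite /hpair pi10_sum; apply: eq_bigr => m _; rewrite pi10_rm.
Qed.
Lemma pi01_hpair w f : pi01 C (hpair w f) = hpair (fun m => pi01 C (w m)) f.
Proof.
by rewrite /hpair pi01_sum; apply: eq_bigr => m _; rewrite pi01_rm.
Qed.

Lemma hpairDr w e f : in_E P e -> in_E P f ->
  hpair w (fun k => e k + f k) = hpair w e + hpair w f.
Proof.
move=> He Hf; rewrite /hpair -big_split; apply: eq_bigr => m _.
by rewrite hDr ?rmDr //; apply: in_E_ebasis.
Qed.

Lemma hpairZr a w f : in_E P f -> hpair w (fun k => a * f k) = rm (hpair w f) (cstar C a).
Proof.
move=> Hf; rewrite /hpair rm_suml; apply: eq_bigr => m _.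
by rewrite hZr ?rmM //; apply: in_E_ebasis.
Qed.

Lemma hpair_proj w f : in_E P f -> hpair (fun j => \sum_k rm (w k) (P k j)) f = hpair w f.
Proof.
move=> Hf; rewrite hpair_sum [hpair w f]/hpair; apply: eq_bigr => k _.
by rewrite hpair_rm //; apply: in_E_ebasis.
Qed.

Lemma star_hpair w e : in_E P e -> star (hpair w e) = \sum_m lm (h e (eb m)) (star (w m)).
Proof.
move=> He; rewrite /hpair star_sum; apply: eq_bigr => m _.
by rewrite star_rm h_adj //; apply: in_E_ebasis.
Qed.

Lemma preserves_metricE nabla : preserves_metric C P h nabla <->
  forall e f, in_E P e -> in_E P f ->
    d0 C (h e f) = hpair (nabla e) f + star (hpair (nabla f) e).
Proof. by split=> metric e f He Hf; rewrite metric // star_hpair. Qed.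

Variable dE : ('I_n -> A) -> ('I_n -> O1).

Lemma chern_christoffel01 nabla : is_chern C P dE h nabla ->
  forall i k, pi01 C (christoffel P nabla i k) = - dE (eb i) k.
Proof. by case=> _ _ nabla01 i k; rewrite pi01N nabla01 //; apply: in_E_ebasis. Qed.

Section Holomorphic.
Hypothesis HdE : is_holomorphic C P dE.

Lemma dE_in_OE v : in_E P v -> in_OE C P (dE v).
Proof. by case: HdE => H _ _ _ /H []. Qed.
Lemma dE01 v : in_E P v -> forall j, pi01 C (dE v j) = dE v j.
Proof. by case: HdE => H _ _ _ /H []. Qed.
Lemma pi10_dE v : in_E P v -> forall j, pi10 C (dE v j) = 0.
Proof. by move=> Hv j; rewrite -dE01 // pi10_01. Qed.
Lemma dED v w j : in_E P v -> in_E P w ->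
  dE (fun k => v k + w k) j = dE v j + dE w j.
Proof. by case: HdE => _ H _ _ ? ?; apply: H. Qed.
Lemma dEZ a v j : in_E P v ->
  dE (fun k => a * v k) j = rm (delbar C a) (v j) + lm a (dE v j).
Proof. by case: HdE => _ _ H _ ?; apply: H. Qed.

Lemma dE_lin (c : 'I_n -> A) (F : 'I_n -> 'I_n -> A) :
  (forall i, in_E P (F i)) -> forall j,
  dE (fun k => \sum_i c i * F i k) j
  = \sum_i (rm (delbar C (c i)) (F i j) + lm (c i) (dE (F i) j)).
Proof.
move=> HF j; rewrite (in_E_big_morph (phi := dE^~ j)) => [|v w Hv Hw|i].
- by apply: eq_bigr => i _; rewrite dEZ.
- exact: dED.
- exact: in_E_scale.
Qed.

Lemma hpair_dE_lin (c : 'I_n -> A) (F : 'I_n -> 'I_n -> A) f :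
  (forall i, in_E P (F i)) -> in_E P f ->
  hpair (dE (fun k => \sum_i c i * F i k)) f
  = \sum_i (rm (delbar C (c i)) (h (F i) f) + lm (c i) (hpair (dE (F i)) f)).
Proof.
move=> HF Hf; rewrite (eq_hpair _ (dE_lin c HF)) hpair_sum.
by apply: eq_bigr => i _; rewrite hpairD hpair_rm ?hpair_lm.
Qed.

Lemma pi01_hpair_dE e f : in_E P e -> pi01 C (hpair (dE e) f) = hpair (dE e) f.
Proof. by move=> He; rewrite pi01_hpair (eq_hpair _ (dE01 He)). Qed.
Lemma pi10_hpair_dE e f : in_E P e -> pi10 C (hpair (dE e) f) = 0.
Proof. by move=> He; rewrite pi10_hpair (eq_hpair _ (pi10_dE He)) hpair0. Qed.

Section Frame.
Variable gl : 'M[A]_n.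
Hypothesis Hgl : is_glow P h gl.

Definition glrow (k : 'I_n) : 'I_n -> A := fun j => gl k j.

Lemma in_E_glrow k : in_E P (glrow k). Proof. by case: (Hgl k). Qed.
Lemma h_glrow e k : in_E P e -> h e (glrow k) = e k.
Proof. by case: (Hgl k) => _ H /H. Qed.

Lemma gl_adj k l : cstar C (gl k l) = gl l k.
Proof.
have := h_adj (in_E_glrow k) (in_E_glrow l).
by rewrite !h_glrow //; apply: in_E_glrow.
Qed.

Lemma h_glrow_l k f : in_E P f -> h (glrow k) f = cstar C (f k).
Proof. by move=> Hf; rewrite -h_adj ?h_glrow //; apply: in_E_glrow. Qed.

Lemma sum_h_gl e l : in_E P e -> \sum_m h e (eb m) * gl m l = e l.
Proof.
move=> He; rewrite -(h_glrow l He) (h_expandr He (in_E_glrow l)).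
by apply: eq_bigr => m _; rewrite gl_adj.
Qed.

Lemma glrow_expand e : in_E P e -> e = (fun j => \sum_m h e (eb m) * glrow m j).
Proof. by move=> He; apply: functional_extensionality => j; rewrite sum_h_gl. Qed.

Lemma hpair_glrow w k : in_OE C P w -> hpair w (glrow k) = w k.
Proof.
move=> Hw; rewrite -[RHS]Hw; apply: eq_bigr => m _.
by rewrite h_glrow //; apply: in_E_ebasis.
Qed.

Lemma chern_pi10 nabla : is_chern C P dE h nabla -> forall v, in_E P v -> forall k,
  pi10 C (nabla v k) = del C (v k) - star (hpair (dE (glrow k)) v).
Proof.
case=> -[nablaOE _ _] /preserves_metricE metric nabla01 v Hv k.
have := congr1 (pi10 C) (metric v (glrow k) Hv (in_E_glrow k)).
rewrite h_glrow // (hpair_glrow _ (nablaOE v Hv)) /del => ->.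
rewrite pi10D -star_pi01 pi01_hpair (eq_hpair _ (nabla01 _ (in_E_glrow k))).
by rewrite addrK.
Qed.

Lemma chern_unique nabla nabla' :
  is_chern C P dE h nabla -> is_chern C P dE h nabla' ->
  forall v, in_E P v -> forall j, nabla v j = nabla' v j.
Proof.
move=> Hn Hn' v Hv j.
rewrite -[LHS]pi_dec -[RHS]pi_dec (chern_pi10 Hn Hv) (chern_pi10 Hn' Hv).
by case: Hn => _ _ H01; case: Hn' => _ _ H01'; rewrite H01 // H01'.
Qed.

Lemma hpair_dE_expand e f : in_E P e -> in_E P f ->
  hpair (dE e) f = \sum_k (rm (delbar C (h e (eb k))) (cstar C (f k))
                           + lm (h e (eb k)) (hpair (dE (glrow k)) f)).
Proof.
move=> He Hf; rewrite {1}(glrow_expand He) hpair_dE_lin //; last exact: in_E_glrow.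
by apply: eq_bigr => k _; rewrite h_glrow_l.
Qed.

Definition chern_form (v : 'I_n -> A) (k : 'I_n) : O1 :=
  del C (v k) + dE v k - star (hpair (dE (glrow k)) v).

Definition chern_conn (v : 'I_n -> A) (j : 'I_n) : O1 :=
  \sum_k rm (chern_form v k) (P k j).

Lemma chern_conn_in_OE v : in_OE C P (chern_conn v).
Proof.
move=> l; under eq_bigr => j _ do rewrite rm_suml.
rewrite exchange_big /=; apply: eq_bigr => k _.
under eq_bigr => j _ do rewrite -rmM.
by rewrite -rm_sumr (in_E_ebasis k l).
Qed.

Lemma chern_formD v w k : in_E P v -> in_E P w ->
  chern_form (fun k => v k + w k) k = chern_form v k + chern_form w k.
Proof.
move=> Hv Hw; rewrite /chern_form delD dED // hpairDr // starD opprD.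
by rewrite (addrACA (del C (v k))) (addrACA (del C (v k) + dE v k)).
Qed.

Lemma chern_formZ a v k : in_E P v ->
  chern_form (fun k => a * v k) k = rm (d0 C a) (v k) + lm a (chern_form v k).
Proof.
move=> Hv; rewrite /chern_form delM dEZ // hpairZr // star_rm cstarK.
by rewrite -del_dec rmDl !lmDr lmNr (addrACA (rm (del C a) (v k))) [RHS]addrA.
Qed.

Lemma pi01_chern_form v : in_E P v -> forall k, pi01 C (chern_form v k) = dE v k.
Proof.
move=> Hv k; rewrite /chern_form !pi01D pi01N pi01_10 dE01 // -star_pi10.
by rewrite pi10_hpair_dE ?star0 ?oppr0 ?add0r ?addr0 //; apply: in_E_glrow.
Qed.

Lemma pi10_chern_form v : in_E P v -> forall k,
  pi10 C (chern_form v k) = del C (v k) - star (hpair (dE (glrow k)) v).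
Proof.
move=> Hv k; rewrite /chern_form !pi10D pi10N pi10_10 pi10_dE // addr0 -star_pi01.
by rewrite pi01_hpair_dE //; apply: in_E_glrow.
Qed.

Lemma chern_connD v w j : in_E P v -> in_E P w ->
  chern_conn (fun k => v k + w k) j = chern_conn v j + chern_conn w j.
Proof.
move=> Hv Hw; rewrite /chern_conn -big_split; apply: eq_bigr => k _.
by rewrite chern_formD // rmDl.
Qed.

Lemma chern_connZ a v j : in_E P v ->
  chern_conn (fun k => a * v k) j = rm (d0 C a) (v j) + lm a (chern_conn v j).
Proof.
move=> Hv; rewrite /chern_conn.
under eq_bigr => k _ do rewrite chern_formZ // rmDl -rmM -lmrA.
by rewrite big_split /= -rm_sumr Hv lm_sumr.
Qed.

Lemma chern_conn01 v : in_E P v -> forall j, pi01 C (chern_conn v j) = dE v j.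
Proof.
move=> Hv j; rewrite -(dE_in_OE Hv j) pi01_sum.
by apply: eq_bigr => k _; rewrite pi01_rm pi01_chern_form.
Qed.

Lemma hpair_chern_conn e f : in_E P f -> hpair (chern_conn e) f = hpair (chern_form e) f.
Proof. exact: hpair_proj. Qed.

Lemma chern_form_metric01 e f : in_E P e -> in_E P f ->
  delbar C (h e f) = pi01 C (hpair (chern_form e) f + star (hpair (chern_form f) e)).
Proof.
move=> He Hf; rewrite pi01D pi01_hpair (eq_hpair _ (pi01_chern_form He)).
rewrite -star_pi10 pi10_hpair (eq_hpair _ (pi10_chern_form Hf)) star_hpair //.
rewrite (hpair_dE_expand He Hf) -big_split (h_expandr He Hf) delbar_sum /=.
apply: eq_bigr => k _; rewrite delbarM starD starN star_del starK lmDr lmNr -addrA.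
by congr (_ + _); rewrite addrC subrK.
Qed.

Lemma chern_conn_metric : preserves_metric C P h chern_conn.
Proof.
apply/preserves_metricE => e f He Hf; rewrite !hpair_chern_conn //.
apply: eq_pi01_star; first exact: chern_form_metric01.
rewrite ax_star_d0 // h_adj // starD starK addrC.
exact: chern_form_metric01.
Qed.

Lemma chern_conn_is_chern : is_chern C P dE h chern_conn.
Proof.
split; [split | exact: chern_conn_metric | exact: chern_conn01].
- by move=> v _; apply: chern_conn_in_OE.
- by move=> v w Hv Hw j; apply: chern_connD.
- by move=> a v Hv j; apply: chern_connZ.
Qed.

Lemma star_hpair_dE_glrow k i :
  star (hpair (dE (glrow k)) (eb i))
  = \sum_l (lm (h (eb i) (eb l)) (del C (gl l k))
            + rm (star (hpair (dE (eb l)) (eb i))) (gl l k)).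
Proof.
rewrite {1}(in_E_expand (in_E_glrow k)) hpair_dE_lin ?star_sum; try exact: in_E_ebasis.
apply: eq_bigr => l _.
by rewrite starD star_rm star_lm star_delbar !h_adj ?gl_adj //; apply: in_E_ebasis.
Qed.

Lemma chern_christoffel10 nabla : is_chern C P dE h nabla -> forall i k,
  - pi10 C (christoffel P nabla i k)
  = \sum_j rm (del C (gup P h i j)) (gl j k)
    + \sum_j \sum_l lm (gup P h i j)
                       (rm (star (pi01 C (christoffel P nabla l j))) (gl l k)).
Proof.
move=> Hn i k.
have -> : \sum_j \sum_l lm (gup P h i j)
                          (rm (star (pi01 C (christoffel P nabla l j))) (gl l k))
          = - \sum_l rm (star (hpair (dE (eb l)) (eb i))) (gl l k).
  rewrite exchange_big -sumrN; apply: eq_bigr => l _.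
  rewrite star_hpair ?rm_suml -?sumrN; last exact: in_E_ebasis.
  apply: eq_bigr => j _.
  by rewrite chern_christoffel01 // starN rmNl lmNr mxE lmrA.
rewrite /christoffel pi10N opprK (chern_pi10 Hn (in_E_ebasis i)).
rewrite -{1}(sum_h_gl k (in_E_ebasis i)) del_sum star_hpair_dE_glrow.
rewrite (eq_bigr _ (fun l _ => delM _ _)) !big_split /= opprD addrA addrK.
by congr (_ - _); apply: eq_bigr => j _; rewrite mxE.
Qed.

End Frame.
End Holomorphic.
End Metric.
End Module.
End Calculus.

Unset Implicit Arguments.

Theorem mainTheorem12 (A : algType algC) (O1 O2 : lmodType algC)
  (C : calc A O1 O2) (HC : calc_ax C)
  (n : nat) (P : 'M[A]_n) (HP : P *m P = P)
  (dE : ('I_n -> A) -> ('I_n -> O1)) (HdE : is_holomorphic C P dE)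
  (h : ('I_n -> A) -> ('I_n -> A) -> A) (Hh : is_hermitian_metric C P h) :
  (exists nabla, is_chern C P dE h nabla) /\
  (forall nabla nabla', is_chern C P dE h nabla -> is_chern C P dE h nabla' ->
     forall v, in_E P v -> forall j, nabla v j = nabla' v j) /\
  (forall nabla, is_chern C P dE h nabla ->
   forall gl : 'M[A]_n, is_glow P h gl ->
     (forall i k, pi01 C (christoffel P nabla i k) = - dE (ebasis P i) k) /\
     (forall i k,
        - pi10 C (christoffel P nabla i k)
        = \sum_j rm1 C (del C (gup P h i j)) (gl j k)
          + \sum_j \sum_l lm1 C (gup P h i j)
                (rm1 C (star1 C (pi01 C (christoffel P nabla l j))) (gl l k)))).
Proof.
have [gl Hgl] := exists_glow Hh.
split; first by exists (chern_conn C P h dE gl); apply: chern_conn_is_chern.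
split; first exact: (chern_unique HC HP Hh Hgl).
move=> nabla Hn gl' Hgl'; split; first exact: (chern_christoffel01 HC HP Hn).
exact: (chern_christoffel10 HC HP Hh HdE Hgl' Hn).
Qed.
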